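(* For each $n\geq 2$, there exist sets $D_n\subseteq\mathbb{Q}^n$ which are dense in $\mathbb{Q}^n$ (with respect to the product topology) and such that no two distinct points of $D_n$ are colinear.
   Context: Two points of $\mathbb{Q}^n$ are colinear if they share a common coordinate, i.e. $a_i=b_i$ for some $i\leq n$. *)

From mathcomp Require Import all_boot all_order all_algebra.
Set Implicit Arguments. Unset Strict Implicit. Unset Printing Implicit Defensive.
Import Order.TTheory GRing.Theory Num.Theory.
Local Open Scope ring_scope.

Definition colinear (n : nat) (a b : 'I_n -> rat) : Prop :=
  exists i : 'I_n, a i = b i.

(* Density in Q^n for the product topology (each factor Q with its usual
   order/metric topology): every nonempty basic open set, i.e. every product
   of nonempty open intervals (a_i, b_i), meets D. *)
Definition dense_Qn (n : nat) (D : ('I_n -> rat) -> Prop) : Prop :=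
  forall a b : 'I_n -> rat, (forall i, a i < b i) ->
    exists d, D d /\ forall i, a i < d i < b i.

From mathcomp Require Import all_boot all_order all_algebra.
From mathcomp Require Import ring lra.
Import Order.TTheory GRing.Theory Num.Theory.
Local Open Scope ring_scope.

(* Enumerate Q^n as (a^(c))_c.  For every c and every precision j, take the
   point just above a^(c) whose coordinates all have denominator exactly
   2^c 3^j; numerators congruent to 1 mod 6 make these fractions irreducible.
   Any box contains such a point, with a^(c) its lower corner and j large.
   Two of these points sharing a coordinate share its denominator, hence
   (c, j), hence are equal. *)

Lemma coprimez_mulD1 (m t : int) : coprimez (m * t + 1) m.
Proof. by apply/coprimezP; exists (1, - t); rewrite /=; ring. Qed.

Definition frac_above (m : nat) (a : rat) (q : nat) : rat :=
  (m%:Z * (Num.floor (a * q%:R / m%:R) + 1) + 1)%:~R / q%:R.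

Section FracAbove.
Variables (m q : nat) (a : rat).
Hypotheses (m_gt0 : (0 < m)%N) (q_gt0 : (0 < q)%N).

Let mR_gt0 : 0 < m%:R :> rat. Proof. by rewrite ltr0n. Qed.
Let qR_gt0 : 0 < q%:R :> rat. Proof. by rewrite ltr0n. Qed.

Lemma frac_above_gt : a < frac_above m a q.
Proof.
rewrite /frac_above ltr_pdivlMr // intrD intrM.
have := floorD1_gt (a * q%:R / m%:R); rewrite ltr_pdivrMr // => lt_aq.
by rewrite (lt_le_trans lt_aq) // mulrC lerDl.
Qed.

Lemma frac_above_le : frac_above m a q <= a + (m.+1)%:R / q%:R.
Proof.
rewrite /frac_above ler_pdivrMr // mulrDl divfK ?gt_eqF // !intrD intrM -natr1.
have := floor_le (a * q%:R / m%:R); rewrite ler_pdivlMr // mulrC.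
lra.
Qed.

Lemma denq_frac_above k : (q %| m ^ k)%N -> denq (frac_above m a q) = q.
Proof.
move=> q_dvd; rewrite /frac_above -[q%:R]/((q%:Z)%:~R) coprimeq_den.
  by case: q q_gt0.
have := coprimez_mulD1 m (Num.floor (a * q%:R / m%:R) + 1).
by rewrite coprimezE => /(coprimeXr k)/(coprime_dvdr q_dvd).
Qed.

End FracAbove.

Lemma expn2M3_inj c j c' j' :
  (2 ^ c * 3 ^ j = 2 ^ c' * 3 ^ j')%N -> c = c' /\ j = j'.
Proof.
have logn2 c0 j0 : logn 2 (2 ^ c0 * 3 ^ j0) = c0.
  by rewrite lognM ?expn_gt0 // pfactorK // logn_coprime ?addn0 // coprimeXr.
have logn3 c0 j0 : logn 3 (2 ^ c0 * 3 ^ j0) = j0.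
  by rewrite lognM ?expn_gt0 // pfactorK // logn_coprime // coprimeXr.
move=> eq_cj; split; first by rewrite -(logn2 c j) eq_cj logn2.
by rewrite -(logn3 c j) eq_cj logn3.
Qed.

Lemma exists_nat_gt (R : archiRealDomainType) (T : finType) (f : T -> R) :
  exists N : nat, forall i, f i < N%:R.
Proof.
exists (\max_i Num.bound `|f i|) => i.
apply: le_lt_trans (ler_norm _) _; apply: lt_le_trans (archi_boundP _) _ => //.
by rewrite ler_nat (leq_bigmax i).
Qed.

Definition corner n (c : nat) : 'I_n -> rat :=
  if @unpickle {ffun 'I_n -> rat} c is Some a then a else fun=> 0.

Lemma corner_pickle n (a : {ffun 'I_n -> rat}) : corner n (pickle a) = a.
Proof. by rewrite /corner pickleK. Qed.

Definition approx_point n (c j : nat) : 'I_n -> rat :=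
  fun i => frac_above 6 (corner n c i) (2 ^ c * 3 ^ j).

Lemma denq_approx_point n c j i :
  denq (approx_point n c j i) = (2 ^ c * 3 ^ j)%N.
Proof.
apply: (@denq_frac_above _ _ _ _ (c + j)); first by rewrite muln_gt0 !expn_gt0.
by rewrite (expnMn 2 3) dvdn_mul // dvdn_exp2l // ?leq_addr ?leq_addl.
Qed.

Lemma approx_point_dense n :
  dense_Qn (fun x => exists c j, x = approx_point n c j).
Proof.
move=> a b lt_ab.
have [N gtN] := @exists_nat_gt _ _ (fun i : 'I_n => 7 / (b i - a i)).
exists (approx_point n (pickle (finfun a)) N).
split=> [|i]; first by exists (pickle (finfun a)), N.
rewrite /approx_point corner_pickle ffunE.
set q := (2 ^ _ * 3 ^ N)%N.
have q_gt0 : (0 < q)%N by rewrite muln_gt0 !expn_gt0.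
have lt_q : 7 / (b i - a i) < q%:R.
  apply: lt_le_trans (gtN i) _; rewrite ler_nat.
  apply: leq_trans (ltnW (ltn_expl N (_ : 1 < 3)%N)) _ => //.
  by rewrite leq_pmull ?expn_gt0.
clearbody q.
apply/andP; split; first by apply: frac_above_gt.
apply: le_lt_trans (frac_above_le _ _ _ _ q_gt0) _ => //.
by rewrite -ltrBrDl ltr_pdivrMr ?ltr0n // mulrC -ltr_pdivrMr ?subr_gt0 ?lt_ab.
Qed.

Lemma approx_point_not_colinear n c j c' j' :
  approx_point n c j <> approx_point n c' j' ->
  ~ colinear (approx_point n c j) (approx_point n c' j').
Proof.
move=> neq [i eq_i]; apply: neq.
have := congr1 denq eq_i; rewrite !denq_approx_point => -[].
by case/expn2M3_inj=> -> ->.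
Qed.

Theorem proposition1p4 (n : nat) (hn : (2 <= n)%N) :
  exists D : ('I_n -> rat) -> Prop,
    dense_Qn D /\
    (forall x y, D x -> D y -> x <> y -> ~ colinear x y).
Proof.
exists (fun x => exists c j, x = approx_point n c j).
split; first exact: approx_point_dense.
by move=> _ _ [c [j ->]] [c' [j' ->]]; apply: approx_point_not_colinear.
Qed.
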